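(* Let $\phi$ be a formula whose free variables are among $\{x\}$. If $[x:=a](\phi\to\mathsf{K}_x[x:=a]\phi)$ is a theorem of $\mathbf{LEL}$ for every $a\in\mathbf{A}$, then for every sentence $\alpha$, $\mathsf{K}_\phi\alpha\to\mathsf{K}_\phi\mathsf{K}_\phi\alpha$ is a theorem of $\mathbf{LEL}$.
   Context: Fix a nonempty finite set $\mathbf{A}$ of agents, a countable set $\mathbf{X}$ of variables disjoint from $\mathbf{A}$, and a countable set $\mathbf{P}$ of predicate letters. Formulas and free variables: $\phi ::= p_x \mid \top \mid \neg\phi \mid (\phi\wedge\phi) \mid [x:=a]\phi \mid \mathsf{K}_X\alpha$ ($p\in\mathbf{P}$, $x\in\mathbf{X}$, $a\in\mathbf{A}$, $X\subseteq\mathbf{X}$ finite possibly empty, $\alpha$ with no free variables), $FV(p_x)=\{x\}$, $FV(\top)=\emptyset$, $FV(\neg\phi)=FV(\phi)$, $FV(\phi\wedge\psi)=FV(\phi)\cup FV(\psi)$, $FV([x:=a]\phi)=FV(\phi)\setminus\{x\}$, $FV(\mathsf{K}_X\alpha)=X$. Sentences have no free variables. $\bot:=\neg\top$, $\langle x:=a\rangle\phi:=\neg[x:=a]\neg\phi$. $\phi[y/x]$ replaces free occurrences of $x$ by $y$ (including in index sets of $\mathsf{K}_X$); admissible if $x$ has no free occurrence within the scope of any $[y:=b]$. $[\vec{x}:=\vec{a}]\phi$ abbreviates $[x_1:=a_1]\cdots[x_n:=a_n]\phi$ for equal-length strings $\vec x,\vec a$, $\mathsf{K}_{\vec x}:=\mathsf{K}_{\{x_1,\dots,x_n\}}$,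 $\mathsf{K}_x:=\mathsf{K}_{\{x\}}$, $\{\vec a\}=\{a_1,\dots,a_n\}$. $\mathbf{LEL}$: axioms — propositional tautologies; $\mathsf{K}_X(\alpha\to\beta)\to(\mathsf{K}_X\alpha\to\mathsf{K}_X\beta)$; $\mathsf{K}_X\alpha\to\mathsf{K}_Y\alpha$ ($X\subseteq Y$); $[x:=a](\phi\to\psi)\to([x:=a]\phi\to[x:=a]\psi)$; $\langle x:=a\rangle\phi\to[x:=a]\phi$; $\phi\to[x:=a]\phi$ ($x\notin FV(\phi)$); $[y:=a]([x:=a]\phi\to\phi[y/x])$ ($\phi[y/x]$ admissible); $[x:=a][y:=b]\phi\to[y:=b][x:=a]\phi$ ($x\neq y$); $\bigwedge_{a\in\mathbf{A}}[x:=a]\phi\to\phi$; $\mathsf{K}_X\alpha\to\alpha$; $[\vec{x}:=\vec{a}](\neg\mathsf{K}_{\vec{x}}\alpha\to\mathsf{K}_{\vec{x}}[\vec{x}:=\vec{a}]\neg\mathsf{K}_{\vec{x}}\alpha)$; $[x:=a]\mathsf{K}_{x}\langle x:=a\rangle\top$; $[x:=a](p_x\to\mathsf{K}_{x}[x:=a]p_x)$; $[\vec{x}:=\vec{a}](\bigwedge_{b\in B}[x:=b]\bot\to\mathsf{K}_{\vec{x}}\bigwedge_{b\in B}[x:=b]\bot)$ with $B=\mathbf{A}\setminus\{\vec a\}$. Rules: modus ponens; from sentence $\alpha$ infer $\mathsf{K}_\emptyset\alpha$; from $\phi$ infer $[x:=a]\phi$. Intensional distributed knowledge: for a formula $\phi$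 with free variables among $\{x\}$ and $A\subseteq\mathbf{A}$, let $\phi!(A):=\bigwedge_{a\in A}\langle x:=a\rangle\phi\wedge\bigwedge_{b\in\mathbf{A}\setminus A}[x:=b]\neg\phi$. For a sentence $\alpha$, $\mathsf{K}_\phi\alpha:=\bigwedge_{\{\vec a\}\subseteq\mathbf{A}}(\phi!(\{\vec a\})\to[\vec{x}:=\vec{a}]\mathsf{K}_{\vec{x}}\alpha)$, where the conjunction ranges over all subsets of $\mathbf{A}$, each listed as a string $\vec a$ of distinct agents and paired with a string $\vec x$ of distinct variables of the same length. *)

From HB Require Import structures.
From mathcomp Require Import all_boot.
From mathcomp Require Import finmap.

Set Implicit Arguments.
Unset Strict Implicit.
Unset Printing Implicit Defensive.

Local Open Scope fset_scope.

Inductive form (A : Type) : Type :=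
  | Pred of nat & nat
  | Top
  | Neg of form A
  | And of form A & form A
  | Asg of nat & A & form A      (* Asg x a f  =  [x:=a] f *)
  | K of {fset nat} & form A.

Arguments Top {A}.

Section LEL.
Variable A : finType.
Notation form := (form A).

Fixpoint fv (f : form) : {fset nat} :=
  match f with
  | Pred _ x => [fset x]
  | Top => fset0
  | Neg g => fv g
  | And g h => fv g `|` fv h
  | Asg x _ g => fv g `\ x
  | K X _ => X
  end.

Fixpoint wf (f : form) : bool :=
  match f with
  | Pred _ _ | Top => true
  | Neg g => wf g
  | And g h => wf g && wf h
  | Asg _ _ g => wf g
  | K _ g => wf g && (fv g == fset0)
  end.

Definition sentence (f : form) : bool := wf f && (fv f == fset0).

(* subst y x f  =  f[y/x] *)
Fixpoint subst (y x : nat) (f : form) : form :=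
  match f with
  | Pred p z => Pred A p (if z == x then y else z)
  | Top => Top
  | Neg g => Neg (subst y x g)
  | And g h => And (subst y x g) (subst y x h)
  | Asg z a g => if z == x then Asg z a g else Asg z a (subst y x g)
  | K X g => K (if x \in X then y |` (X `\ x) else X) g
  end.

(* f[y/x] admissible: x has no free occurrence within the scope of any [y:=b] *)
Fixpoint admissible (y x : nat) (f : form) : bool :=
  match f with
  | Pred _ _ | Top | K _ _ => true
  | Neg g => admissible y x g
  | And g h => admissible y x g && admissible y x h
  | Asg z _ g => if z == x then true
                 else ((z != y) || (x \notin fv g)) && admissible y x g
  end.

Definition Imp (f g : form) : form := Neg (And f (Neg g)).
Definition Bot : form := Neg Top.
Definition Dia (x : nat) (a : A) (f : form) : form := Neg (Asg x a (Neg f)).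
Definition bigAnd (l : seq form) : form := foldr (@And A) Top l.

Definition asgs (s : seq (nat * A)) (f : form) : form :=
  foldr (fun p g => Asg p.1 p.2 g) f s.
Definition vars (s : seq (nat * A)) : {fset nat} := [fset v | v in map fst s].

(* propositional tautologies: true under every valuation of the
   non-propositional (atomic, assignment and knowledge) subformulas *)
Fixpoint eval (v : form -> bool) (f : form) : bool :=
  match f with
  | Top => true
  | Neg g => ~~ eval v g
  | And g h => eval v g && eval v h
  | _ => v f
  end.
Definition taut (f : form) : Prop := forall v, eval v f.

Inductive axiom : form -> Prop :=
  | ax_taut f : taut f -> axiom f
  | ax_KK X a b : axiom (Imp (K X (Imp a b)) (Imp (K X a) (K X b)))
  | ax_Kmono X Y a : X `<=` Y -> axiom (Imp (K X a) (K Y a))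
  | ax_AK x a f g :
      axiom (Imp (Asg x a (Imp f g)) (Imp (Asg x a f) (Asg x a g)))
  | ax_func x a f : axiom (Imp (Dia x a f) (Asg x a f))
  | ax_vac x a f : x \notin fv f -> axiom (Imp f (Asg x a f))
  | ax_sub x y a f : admissible y x f ->
      axiom (Asg y a (Imp (Asg x a f) (subst y x f)))
  | ax_comm x y a b f : x != y ->
      axiom (Imp (Asg x a (Asg y b f)) (Asg y b (Asg x a f)))
  | ax_cover x f : axiom (Imp (bigAnd [seq Asg x a f | a <- enum A]) f)
  | ax_T X a : axiom (Imp (K X a) a)
  | ax_neg s a :
      axiom (asgs s (Imp (Neg (K (vars s) a))
                         (K (vars s) (asgs s (Neg (K (vars s) a))))))
  | ax_self x a : axiom (Asg x a (K [fset x] (Dia x a Top)))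
  | ax_pred p x a :
      axiom (Asg x a (Imp (Pred A p x) (K [fset x] (Asg x a (Pred A p x)))))
  | ax_abs s x :
      axiom (asgs s
        (Imp (bigAnd [seq Asg x b Bot | b <- enum A & b \notin map snd s])
             (K (vars s) (bigAnd [seq Asg x b Bot | b <- enum A & b \notin map snd s])))).

Inductive thm : form -> Prop :=
  | thm_ax f : axiom f -> wf f -> thm f
  | thm_mp f g : thm (Imp f g) -> thm f -> thm g
  | thm_nec a : thm a -> sentence a -> thm (K fset0 a)
  | thm_asg x b f : thm f -> thm (Asg x b f).

Definition excl (x : nat) (phi : form) (S : {set A}) : form :=
  And (bigAnd [seq Dia x a phi | a <- enum S])
      (bigAnd [seq Asg x b (Neg phi) | b <- enum (~: S)]).

Definition good_listing (ls : {set A} -> seq (nat * A)) : Prop :=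
  forall S, perm_eq (map snd (ls S)) (enum S) /\ uniq (map fst (ls S)).

Definition Kphi (ls : {set A} -> seq (nat * A)) (x : nat) (phi alpha : form)
  : form :=
  bigAnd [seq Imp (excl x phi T) (asgs (ls T) (K (vars (ls T)) alpha))
         | T <- enum {set A}].

End LEL.

From HB Require Import structures.
From mathcomp Require Import all_boot.
From mathcomp Require Import finmap.

(* Write D_s alpha for [x1:=a1]...[xn:=an] K_{x1..xn} alpha, where s lists the
   pairs (xi, ai), so that K_phi alpha is the conjunction of the implications
   phi!(S) -> D_S alpha.  Two properties of D carry the argument.  First, D_s alpha
   implies D_t alpha as soon as every agent of s occurs in t: after moving s to
   variables fresh for both lists, the substitution axiom renames each variable
   of s into a variable of t carrying the same agent, and K is monotone in its
   index set.  Second, D_s alpha implies D_s D_s alpha (positive introspection),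
   which follows from the negative-introspection axiom and truthfulness.
   Now assume K_phi alpha and phi!(S), hence D_S alpha; it suffices to derive
   D_S (phi!(T) -> D_T alpha) for every T.  If S is a subset of T, introspection
   and the first property give it.  Otherwise some a in S \ T satisfies
   <x:=a>phi, which the hypothesis on phi turns into [x:=a]K_x<x:=a>phi, that is
   D_[(x,a)] <x:=a>phi; the first property lifts this to D_S <x:=a>phi, and
   <x:=a>phi refutes phi!(T). *)

Set Implicit Arguments.
Unset Strict Implicit.
Unset Printing Implicit Defensive.

Local Open Scope fset_scope.

Section LELTheory.
Variable A : finType.
Implicit Types (f g h N al : form A) (s t u : seq (nat * A)).

Local Notation asgsK s al := (asgs s (K (vars s) al)).

Lemma eval_Imp (v : form A -> bool) f g : eval v (Imp f g) = (eval v f ==> eval v g).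
Proof. by rewrite /=; case: (eval v f); case: (eval v g). Qed.

Lemma eval_bigAnd (v : form A -> bool) l : eval v (bigAnd l) = all (eval v) l.
Proof. by elim: l => //= f l ->. Qed.

Lemma mem_vars s v : (v \in vars s) = (v \in map fst s).
Proof. by apply/imfsetP/idP => [[w Hw ->]|Hv] //; exists v. Qed.

Lemma vars1 y (a : A) : vars [:: (y, a)] = [fset y].
Proof. by apply/fsetP => v; rewrite mem_vars !inE. Qed.

Lemma mem_fv_asgs s f v : (v \in fv (asgs s f)) = (v \in fv f) && (v \notin map fst s).
Proof.
elim: s => [|[y a] s IH] /=; first by rewrite andbT.
by rewrite !inE IH negb_or; case: (v == y); rewrite ?andbF ?andbT.
Qed.

Lemma wf_asgs s f : wf (asgs s f) = wf f.
Proof. by elim: s. Qed.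

Lemma wf_subst y z f : wf (subst y z f) = wf f.
Proof.
elim: f => [p w| |g IH|g IHg h IHh|w b g IH|X g IH] //=; rewrite ?IH ?IHg ?IHh //.
by case: (w == z).
Qed.

(* Atoms are matched syntactically: a unification pattern [eval v _] would also
   match [true], which is [eval v Top], and loop. *)
Ltac taut_tac :=
  let v := fresh "v" in move=> v /=;
  repeat match goal with
  | |- context [v ?t] => case: (v t)
  | |- context [eval v ?t] => case: (eval v t)
  end.

Lemma sent_wf f : sentence f -> wf f.
Proof. by case/andP. Qed.

(* [wf] is unfolded by hand because simplification would expand [wf (K X f)]
   beyond [sentence f], the form in which such facts are available. *)
Ltac wf_tac :=
  repeat match goal with
  | |- context [wf (Imp ?f ?g)] => change (wf (Imp f g)) with (wf f && wf g)
  | |- context [wf (Dia ?y ?a ?f)] => change (wf (Dia y a f)) with (wf f)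
  | |- context [wf (Neg ?f)] => change (wf (Neg f)) with (wf f)
  | |- context [wf (And ?f ?g)] => change (wf (And f g)) with (wf f && wf g)
  | |- context [wf (Asg ?y ?a ?f)] => change (wf (Asg y a f)) with (wf f)
  | |- context [wf (K ?X ?f)] => change (wf (K X f)) with (sentence f)
  | |- context [wf Top] => change (wf Top) with true
  | |- context [wf (asgs ?s ?f)] => rewrite (wf_asgs s f)
  | |- context [wf (subst ?y ?z ?f)] => rewrite (wf_subst y z f)
  end;
  repeat match goal with |- is_true (_ && _) => apply/andP; split end;
  by [| apply: sent_wf].

Lemma sent_fv f v : sentence f -> v \notin fv f.
Proof. by case/andP => _ /eqP ->; rewrite inE. Qed.

Lemma sentP f : wf f -> {subset fv f <= pred0} -> sentence f.
Proof.
move=> Wf H; rewrite /sentence Wf; apply/eqP/fsetP => v; rewrite inE.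
by apply/negbTE/negP => /H.
Qed.

Lemma sentI f g : sentence f -> sentence g -> sentence (Imp f g).
Proof.
by move=> /andP[Wf /eqP Ff] /andP[Wg /eqP Fg]; rewrite /sentence /= Wf Wg Ff Fg fsetU0.
Qed.

Lemma sentA f g : sentence f -> sentence g -> sentence (And f g).
Proof.
by move=> /andP[Wf /eqP Ff] /andP[Wg /eqP Fg]; rewrite /sentence /= Wf Wg Ff Fg fsetU0.
Qed.

Lemma sent_bigAnd (l : seq (form A)) : all (@sentence A) l -> sentence (bigAnd l).
Proof. by elim: l => //= f l IH /andP[Sf /IH]; apply: sentA. Qed.

Lemma sent_asgs s f : wf f -> {subset fv f <= map fst s} -> sentence (asgs s f).
Proof.
move=> Wf H; apply: sentP => [|v]; first by rewrite wf_asgs.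
by rewrite mem_fv_asgs => /andP[/H ->].
Qed.

Lemma sent_asgsK s al : sentence al -> sentence (asgsK s al).
Proof. by move=> Sa; apply: sent_asgs => // v; rewrite /= mem_vars. Qed.

Lemma sent_Asg y a f : wf f -> fv f `<=` [fset y] -> sentence (Asg y a f).
Proof.
move=> Wf /fsubsetP H; apply: (@sent_asgs [:: (y, a)]) => // v /H.
by rewrite inE => /eqP ->; rewrite mem_head.
Qed.

Lemma thm_wf f : thm f -> wf f.
Proof. by elim=> {f} // f g _ /andP[]. Qed.

Lemma thm_taut f : taut f -> wf f -> thm f.
Proof. by move=> Ht Wf; apply: thm_ax => //; apply: ax_taut. Qed.

Lemma thm_taut1 f g : thm f -> taut (Imp f g) -> wf g -> thm g.
Proof.
move=> H Ht Wg; apply: (thm_mp _ H); apply: thm_taut Ht _.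
by rewrite /= (thm_wf H).
Qed.

Lemma thm_taut2 f1 f2 g : thm f1 -> thm f2 -> taut (Imp f1 (Imp f2 g)) -> wf g -> thm g.
Proof.
move=> H1 H2 Ht Wg; apply: (thm_mp (thm_mp _ H1) H2); apply: thm_taut Ht _.
by rewrite /= (thm_wf H1) (thm_wf H2).
Qed.

Lemma thm_taut3 f1 f2 f3 g : thm f1 -> thm f2 -> thm f3 ->
  taut (Imp f1 (Imp f2 (Imp f3 g))) -> wf g -> thm g.
Proof.
move=> H1 H2 H3 Ht Wg; apply: (thm_mp (thm_mp (thm_mp _ H1) H2) H3).
by apply: thm_taut Ht _; rewrite /= (thm_wf H1) (thm_wf H2) (thm_wf H3).
Qed.

Lemma thm_imp_trans f g h : thm (Imp f g) -> thm (Imp g h) -> thm (Imp f h).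
Proof.
move=> H1 H2; move: (thm_wf H1) (thm_wf H2) => /andP[Wf _] /andP[_ Wh].
by apply: (thm_taut2 H1 H2); [taut_tac | wf_tac].
Qed.

Lemma thm_asgs s f : thm f -> thm (asgs s f).
Proof. by elim: s => //= p s IH /IH; apply: thm_asg. Qed.

Lemma thm_asgs_K s f g : wf f -> wf g ->
  thm (Imp (asgs s (Imp f g)) (Imp (asgs s f) (asgs s g))).
Proof.
move=> Wf Wg; elim: s => [|[y a] s IH] /=; first by apply: thm_taut; [taut_tac | wf_tac].
have AK f' g' : wf f' -> wf g' ->
    thm (Imp (Asg y a (Imp f' g')) (Imp (Asg y a f') (Asg y a g'))).
  by move=> Wf' Wg'; apply: thm_ax; [apply: ax_AK | wf_tac].
have AK1 := AK (asgs s (Imp f g)) (Imp (asgs s f) (asgs s g)).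
have AK2 := AK (asgs s f) (asgs s g).
by apply: (thm_taut3 (thm_asg y a IH) (AK1 _ _) (AK2 _ _)); [wf_tac.. | taut_tac | wf_tac].
Qed.

Lemma thm_asgs_wf s f : thm (asgs s f) -> wf f.
Proof. by move/thm_wf; rewrite wf_asgs. Qed.

Lemma asgs_mp s f g : thm (asgs s (Imp f g)) -> thm (Imp (asgs s f) (asgs s g)).
Proof.
move=> H; have /andP[Wf Wg] := thm_asgs_wf H.
exact: thm_mp (thm_asgs_K s Wf Wg) H.
Qed.

Lemma asgs_mp2 s f1 f2 g : thm (asgs s (Imp f1 (Imp f2 g))) ->
  thm (Imp (asgs s f1) (Imp (asgs s f2) (asgs s g))).
Proof.
move=> H; have /and3P[W1 W2 Wg] := thm_asgs_wf H.
by apply: (thm_taut2 (asgs_mp H) (thm_asgs_K s W2 Wg)); [taut_tac | wf_tac].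
Qed.

Lemma asgs_mono s f g : thm (Imp f g) -> thm (Imp (asgs s f) (asgs s g)).
Proof. by move=> H; apply/asgs_mp/thm_asgs. Qed.

Lemma asgs_taut1 s f g : thm (asgs s f) -> taut (Imp f g) -> wf g -> thm (asgs s g).
Proof.
move=> H Ht Wg; have Wf := thm_asgs_wf H.
by apply: thm_mp H; apply/asgs_mono/thm_taut; last wf_tac.
Qed.

Lemma asgs_taut2 s f1 f2 g : thm (asgs s f1) -> thm (asgs s f2) ->
  taut (Imp f1 (Imp f2 g)) -> wf g -> thm (asgs s g).
Proof.
move=> H1 H2 Ht Wg.
have W1 := thm_asgs_wf H1; have W2 := thm_asgs_wf H2.
have /asgs_mp2 H : thm (asgs s (Imp f1 (Imp f2 g))) by apply/thm_asgs/thm_taut; last wf_tac.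
exact: thm_mp (thm_mp H H1) H2.
Qed.

Lemma asgs_taut3 s f1 f2 f3 g : thm (asgs s f1) -> thm (asgs s f2) -> thm (asgs s f3) ->
  taut (Imp f1 (Imp f2 (Imp f3 g))) -> wf g -> thm (asgs s g).
Proof.
move=> H1 H2 H3 Ht Wg.
have W3 := thm_asgs_wf H3.
have H : thm (asgs s (Imp f3 g)) by apply: (asgs_taut2 H1 H2 Ht); wf_tac.
exact: thm_mp (asgs_mp H) H3.
Qed.

Lemma thm_K_mono X f g : sentence f -> sentence g -> thm (Imp f g) ->
  thm (Imp (K X f) (K X g)).
Proof.
move=> Sf Sg H; have Sfg := sentI Sf Sg.
have K0 : thm (Imp (K fset0 (Imp f g)) (K X (Imp f g))).
  by apply: thm_ax; [apply: ax_Kmono (fsub0set _) | wf_tac].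
have KK : thm (Imp (K X (Imp f g)) (Imp (K X f) (K X g))).
  by apply: thm_ax; [apply: ax_KK | wf_tac].
exact: thm_mp KK (thm_mp K0 (thm_nec H Sfg)).
Qed.

Lemma thm_K_mono2 X f1 f2 g : sentence f1 -> sentence f2 -> sentence g ->
  thm (Imp f1 (Imp f2 g)) -> thm (Imp (K X f1) (Imp (K X f2) (K X g))).
Proof.
move=> S1 S2 Sg H; have S2g := sentI S2 Sg.
have KK : thm (Imp (K X (Imp f2 g)) (Imp (K X f2) (K X g))).
  by apply: thm_ax; [apply: ax_KK | wf_tac].
by apply: (thm_taut2 (thm_K_mono X S1 S2g H) KK); [taut_tac | wf_tac].
Qed.

Lemma thm_K_Top X : thm (K X (@Top A)).
Proof.
have K0 : thm (K fset0 (@Top A)) by apply: thm_nec => //; apply: thm_taut.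
by apply: (thm_mp _ K0); apply: thm_ax; [apply: ax_Kmono (fsub0set _) | wf_tac].
Qed.

Lemma thm_Imp_bigAnd (I : Type) E (F : I -> form A) (r : seq I) : wf E ->
  (forall i, thm (Imp E (F i))) -> thm (Imp E (bigAnd (map F r))).
Proof.
move=> WE HF; elim: r => [|i r IH] /=; first by apply: thm_taut; [taut_tac | wf_tac].
have /andP[_ Wi] := thm_wf (HF i); have /andP[_ Wr] := thm_wf IH.
by apply: (thm_taut2 (HF i) IH); [taut_tac | wf_tac].
Qed.

Lemma asgs_K_bigAnd (I : Type) s X E (F : I -> form A) (r : seq I) : wf E ->
  (forall i, sentence (F i)) -> (forall i, thm (Imp E (asgs s (K X (F i))))) ->
  thm (Imp E (asgs s (K X (bigAnd (map F r))))).
Proof.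
move=> WE SF HF; elim: r => [|i r IH] /=.
  by apply: (thm_taut1 (thm_asgs s (thm_K_Top X))); [taut_tac | wf_tac].
have Sr : sentence (bigAnd (map F r)) 
  by apply: sent_bigAnd; elim: r {IH} => //= j r ->; rewrite SF.
have Sir := sentA (SF i) Sr.
have Hand : thm (Imp (F i) (Imp (bigAnd (map F r)) (And (F i) (bigAnd (map F r))))).
  by apply: thm_taut; [taut_tac | wf_tac].
have /asgs_mp2 KAnd := thm_asgs s (thm_K_mono2 X (SF i) Sr Sir Hand).
by apply: (thm_taut3 (HF i) IH KAnd); [taut_tac | wf_tac].
Qed.

Lemma thm_Imp_asgs_sentence s f : sentence f -> thm (Imp f (asgs s f)).
Proof.
move=> Sf; elim: s => [|[y a] s IH] /=; first by apply: thm_taut; [taut_tac | wf_tac].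
apply: thm_imp_trans IH _; apply: thm_ax; last by wf_tac.
by apply: ax_vac; rewrite mem_fv_asgs (negbTE (sent_fv _ Sf)).
Qed.

Lemma asgs_Imp_sentence s N f : sentence N -> wf f ->
  thm (Imp N (asgs s f)) -> thm (asgs s (Imp N f)).
Proof.
move=> SN Wf H.
have NegN : thm (Imp (Neg N) (asgs s (Imp N f))).
  apply: thm_imp_trans (thm_Imp_asgs_sentence s (SN : sentence (Neg N))) _.
  by apply/asgs_mono/thm_taut; [taut_tac | wf_tac].
have PosN : thm (Imp N (asgs s (Imp N f))).
  apply: thm_imp_trans H _.
  by apply/asgs_mono/thm_taut; [taut_tac | wf_tac].
by apply: (thm_taut2 NegN PosN); [taut_tac | wf_tac].
Qed.

Lemma asgs_cat s1 s2 f : asgs (s1 ++ s2) f = asgs s1 (asgs s2 f).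
Proof. exact: foldr_cat. Qed.

Lemma subst_asgs y z s f : z \notin map fst s -> subst y z (asgs s f) = asgs s (subst y z f).
Proof.
elim: s => [|[w b] s IH] //=; rewrite inE negb_or => /andP[Hzw Hs].
by rewrite eq_sym (negbTE Hzw) IH.
Qed.

Lemma admissible_asgs y z s f : y \notin map fst s -> z \notin map fst s ->
  admissible y z f -> admissible y z (asgs s f).
Proof.
elim: s => [|[w b] s IH] //=; rewrite !inE !negb_or => /andP[Hyw Hy] /andP[Hzw Hz] Ha.
by rewrite eq_sym (negbTE Hzw) eq_sym Hyw IH.
Qed.

Lemma asgs_Asg_comm y a s f : y \notin map fst s -> wf f ->
  thm (Imp (asgs s (Asg y a f)) (Asg y a (asgs s f))).
Proof.
elim: s => [|[w b] s IH] /=; first by move=> _ Wf; apply: thm_taut; [taut_tac | wf_tac].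
rewrite inE negb_or => /andP[Hwy Hy] Wf.
apply: thm_imp_trans (asgs_mono [:: (w, b)] (IH Hy Wf)) _.
by apply: thm_ax; [apply: ax_comm; rewrite eq_sym | wf_tac].
Qed.

Lemma asgs_subst t y z a f : uniq (map fst t) -> (y, a) \in t -> admissible y z f -> wf f ->
  thm (asgs t (Imp (Asg z a f) (subst y z f))).
Proof.
move=> Ut Hin Ad Wf; case/splitPr: Hin Ut => t1 t2.
rewrite map_cat cat_uniq /= => /and3P[_ _ /andP[Hy _]].
have Sub : thm (Asg y a (Imp (Asg z a f) (subst y z f))).
  by apply: thm_ax; [apply: ax_sub | wf_tac].
rewrite asgs_cat /=; apply: thm_mp (asgs_mono t1 (asgs_Asg_comm a Hy _)) _; first by wf_tac.
exact/thm_asgs/thm_asgs.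
Qed.

(* [G] collects the variables of [t] that have already replaced variables of [u]. *)
Lemma asgsK_relist_fresh_ext t al : sentence al -> uniq (map fst t) ->
  forall u G, uniq (map fst u) -> {in map fst u, forall v, v \notin map fst t} ->
  {subset map snd u <= map snd t} -> G `<=` vars t ->
  thm (asgs t (Imp (asgs u (K (vars u `|` G) al)) (K (vars t) al))).
Proof.
move=> Sa Ut; elim=> [|[z a] u IH] G /=.
  move=> _ _ _ HG; apply/thm_asgs/thm_ax; last by wf_tac.
  by apply: ax_Kmono; apply/fsubsetP => v; rewrite inE mem_vars /= => /(fsubsetP HG).
case/andP=> Hzu Uu Hd Hag HG.
have Hzt : z \notin map fst t by apply: Hd; rewrite mem_head.
have /mapP[[y b] Hy /= Eab] := Hag a (mem_head _ _); rewrite -{b}Eab in Hy.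
have Hyt : y \in map fst t by apply/mapP; exists (y, a).
have HzG : z \notin G by apply: (contraNN _ Hzt) => /(fsubsetP HG); rewrite mem_vars.
set f := asgs u (K (vars ((z, a) :: u) `|` G) al).
have Wf : wf f by rewrite /f wf_asgs.
have Ad : admissible y z f.
  by apply: admissible_asgs => //; apply/negP => /(fun Hyu => Hd y (mem_behead Hyu)); rewrite Hyt.
have Hsub : subst y z f = asgs u (K (vars u `|` (y |` G)) al).
  rewrite /f subst_asgs //= in_fsetU mem_vars /= mem_head /=; congr (asgs u (K _ al)).
  apply/fsetP => v; rewrite !(in_fsetU, in_fsetD1, mem_vars, in_fset1U) /= in_cons.
  by case: (eqVneq v z) => [->|_] /=; [rewrite (negbTE Hzu) (negbTE HzG) !orbF | rewrite orbCA].
have Rest : thm (asgs t (Imp (asgs u (K (vars u `|` (y |` G)) al)) (K (vars t) al))).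
  apply: IH => //.
  - by move=> v Hv; apply: Hd; rewrite inE Hv orbT.
  - by move=> b Hb; apply: Hag; rewrite inE Hb orbT.
  - by apply/fsubsetP => v; rewrite in_fset1U => /predU1P[->|/(fsubsetP HG)] //; rewrite mem_vars.
have := asgs_subst Ut Hy Ad Wf; rewrite Hsub => Sub.
by apply: (asgs_taut2 Sub Rest); [taut_tac | wf_tac].
Qed.

Lemma asgsK_relist_fresh t u al : sentence al -> uniq (map fst t) -> uniq (map fst u) ->
  {in map fst u, forall v, v \notin map fst t} -> {subset map snd u <= map snd t} ->
  thm (Imp (asgsK u al) (asgsK t al)).
Proof.
move=> Sa Ut Uu Hd Hag.
have := asgsK_relist_fresh_ext Sa Ut Uu Hd Hag (fsub0set _); rewrite fsetU0.
move=> /asgs_mp H; apply: (thm_imp_trans _ H).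
exact/thm_Imp_asgs_sentence/sent_asgsK.
Qed.

Lemma asgsK_relist s t al : sentence al -> uniq (map fst s) -> uniq (map fst t) ->
  {subset map snd s <= map snd t} -> thm (Imp (asgsK s al) (asgsK t al)).
Proof.
move=> Sa Us Ut Hst.
(* [s'] is a copy of [s] on variables above all those of [s] and [t]. *)
pose M := (\max_(v <- map fst (s ++ t)) v).+1.
pose s' := [seq ((p.1 + M)%N, p.2) | p <- s].
have fst_s' : map fst s' = [seq (v + M)%N | v <- map fst s] by rewrite -!map_comp.
have snd_s' : map snd s' = map snd s by rewrite -map_comp.
have Us' : uniq (map fst s') by rewrite fst_s' map_inj_uniq //; apply: addIn.
have fresh v : v \in map fst (s ++ t) -> v \notin map fst s'.
  move=> Hv; rewrite fst_s'; apply/mapP => -[w _ Evw].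
  have : v <= \max_(i <- map fst (s ++ t)) i := leq_bigmax_seq v Hv isT.
  by rewrite Evw -ltnS -/M ltnNge leq_addl.
apply: (@thm_imp_trans _ (asgsK s' al)); apply: asgsK_relist_fresh => //.
- by move=> v Hv; apply: fresh; rewrite map_cat mem_cat Hv.
- by rewrite snd_s'.
- move=> v Hv; apply: (contraL _ Hv) => Hvt.
  by apply: fresh; rewrite map_cat mem_cat Hvt orbT.
- by rewrite snd_s'.
Qed.

(* With K := K_(vars s) and b := [s]~K al, negative introspection for al and
   truthfulness of K b give [s](K al -> ~K b); negative introspection for b then
   yields [s]K [s]~K b, and [s]~K b implies [s]K al by the contrapositive of the
   first instance. *)
Lemma asgsK_introspection s al : sentence al ->
  thm (asgs s (Imp (K (vars s) al) (K (vars s) (asgsK s al)))).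
Proof.
move=> Sa; have SKa : sentence (asgsK s al) := sent_asgsK s Sa.
set Ka := K (vars s) al; set b := asgs s (Neg Ka); set Kb := K (vars s) b.
have Sb : sentence b by apply: sent_asgs => // v; rewrite /= mem_vars.
have SnKb : sentence (asgs s (Neg Kb)) by apply: sent_asgs => // v; rewrite /= mem_vars.
have Neg1 : thm (asgs s (Imp (Neg Ka) Kb)) by apply: thm_ax; [apply: ax_neg | wf_tac].
have Neg2 : thm (asgs s (Imp (Neg Kb) (K (vars s) (asgs s (Neg Kb))))).
  by apply: thm_ax; [apply: ax_neg | wf_tac].
have Tr : thm (Imp Kb b) by apply: thm_ax; [apply: ax_T | wf_tac].
have Det : thm (asgs s (Imp b (Neg Ka))).
  by apply: (asgs_Imp_sentence Sb) => //; apply: thm_taut; [taut_tac | wf_tac].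
have Ka_nKb : thm (asgs s (Imp Ka (Neg Kb))).
  by apply: (asgs_taut2 Det (thm_asgs s Tr)); [taut_tac | wf_tac].
have nKb_Ka : thm (Imp (asgs s (Neg Kb)) (asgsK s al)).
  by apply: asgs_mp; apply: (asgs_taut1 Neg1); [taut_tac | wf_tac].
have KnKb_KKa := thm_asgs s (thm_K_mono (vars s) SnKb SKa nKb_Ka).
by apply: (asgs_taut3 Ka_nKb Neg2 KnKb_KKa); [taut_tac | wf_tac].
Qed.

(* The agent bound to [y] knows that [y] denotes [a] (axiom [ax_self]), which
   upgrades [K_y [y:=a] f] to [K_y <y:=a> f]. *)
Lemma Dia_Asg_K y a f : wf f -> fv f `<=` [fset y] ->
  thm (Asg y a (Imp f (K [fset y] (Asg y a f)))) ->
  thm (Imp (Dia y a f) (Asg y a (K [fset y] (Dia y a f)))).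
Proof.
move=> Wf Hfv H.
have Sf : sentence (Asg y a f) := sent_Asg a Wf Hfv.
have SDf : sentence (Dia y a f) := sent_Asg a Wf Hfv.
have SDT : sentence (Dia y a (@Top A)) := sent_Asg a (f := Neg Top) isT (fsub0set _).
have Func : thm (Imp (Asg y a f) (Imp (Dia y a Top) (Dia y a f))).
  have : thm (Imp (Asg y a f) (Imp (Asg y a (Neg f)) (Asg y a (Neg Top)))).
    by apply: (asgs_mp2 (s := [:: (y, a)])); apply/thm_asg/thm_taut; [taut_tac | wf_tac].
  by move=> /thm_taut1; apply; [taut_tac | wf_tac].
have Self : thm (Asg y a (K [fset y] (Dia y a Top))) by apply: thm_ax; [apply: ax_self | wf_tac].
have KFunc := thm_asg y a (thm_K_mono2 [fset y] Sf SDT SDf Func).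
have KDf : thm (Asg y a (Imp (Neg (K [fset y] (Dia y a f))) (Neg f))).
  by apply: (asgs_taut3 (s := [:: (y, a)]) H Self KFunc); [taut_tac | wf_tac].
have Dia_DiaK : thm (Imp (Dia y a f) (Dia y a (K [fset y] (Dia y a f)))).
  by apply: (thm_taut1 (asgs_mp (s := [:: (y, a)]) KDf)); [taut_tac | wf_tac].
apply: thm_imp_trans Dia_DiaK _.
by apply: thm_ax; [apply: ax_func | wf_tac].
Qed.

Section IntensionalKnowledge.
Variable ls : {set A} -> seq (nat * A).
Hypothesis Hls : good_listing ls.
Variables (x : nat) (phi : form A).
Hypotheses (Hwf : wf phi) (Hfv : fv phi `<=` [fset x]).
Hypothesis Hphi : forall a, thm (Asg x a (Imp phi (K [fset x] (Asg x a phi)))).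

Local Notation Kp := (Kphi ls x phi).

Lemma uniq_listing S : uniq (map fst (ls S)).
Proof. by case: (Hls S). Qed.

Lemma mem_listing S a : (a \in map snd (ls S)) = (a \in S).
Proof. by case: (Hls S) => /perm_mem -> _; rewrite mem_enum. Qed.

Lemma sent_Dia a : sentence (Dia x a phi).
Proof. exact: (sent_Asg a (f := Neg phi) Hwf Hfv). Qed.

Lemma sent_excl S : sentence (excl x phi S).
Proof.
apply: sentA; apply: sent_bigAnd; rewrite all_map; apply/allP => b _ /=.
  exact: sent_Dia.
exact: (sent_Asg b (f := Neg phi) Hwf Hfv).
Qed.

Lemma sent_Kphi al : sentence al -> sentence (Kp al).
Proof.
move=> Sa; apply: sent_bigAnd; rewrite all_map; apply/allP => T _ /=.
exact: sentI (sent_excl T) (sent_asgsK _ Sa).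
Qed.

Lemma Kphi_excl S al : sentence al ->
  thm (Imp (Kp al) (Imp (excl x phi S) (asgsK (ls S) al))).
Proof.
move=> Sa; have SK := sent_Kphi Sa; have SE := sent_excl S; have SD := sent_asgsK (ls S) Sa.
apply: thm_taut => [v|]; last by wf_tac.
rewrite !eval_Imp eval_bigAnd all_map; apply/implyP => /allP /(_ S).
by rewrite mem_enum -eval_Imp => /(_ isT).
Qed.

Lemma excl_Dia (S : {set A}) a : a \in S -> taut (Imp (excl x phi S) (Dia x a phi)).
Proof.
move=> Ha v; rewrite eval_Imp [eval v (excl _ _ _)]/= eval_bigAnd all_map.
by apply/implyP => /andP[/allP /(_ a)]; rewrite mem_enum => /(_ Ha).
Qed.

Lemma Dia_Neg_excl (T : {set A}) a : a \notin T ->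
  taut (Imp (Dia x a phi) (Neg (excl x phi T))).
Proof.
move=> Ha v; rewrite eval_Imp [eval v (Neg (excl _ _ _))]/=.
rewrite (eval_bigAnd _ [seq _ | b <- enum (~: T)]) all_map.
apply/implyP => Hd; apply/nandP; right; apply/allPn; exists a.
  by rewrite mem_enum inE.
exact: Hd.
Qed.

Lemma asgsK_excl_subset (S T : {set A}) al : sentence al -> S \subset T ->
  thm (Imp (asgsK (ls S) al) (asgsK (ls S) (Imp (excl x phi T) (asgsK (ls T) al)))).
Proof.
move=> Sa HST; have SD := sent_asgsK (ls S) Sa.
have SET := sent_excl T; have SDT := sent_asgsK (ls T) Sa.
have Relist : thm (Imp (asgsK (ls S) al) (asgsK (ls T) al)).
  apply: asgsK_relist; rewrite ?uniq_listing // => b.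
  by rewrite !mem_listing; apply: (subsetP HST).
have Weak : thm (Imp (asgsK (ls S) al) (Imp (excl x phi T) (asgsK (ls T) al))).
  by apply: (thm_taut1 Relist); [taut_tac | wf_tac].
apply: thm_imp_trans (asgs_mp (asgsK_introspection (ls S) Sa)) _.
exact: asgs_mono _ (thm_K_mono _ SD (sentI SET SDT) Weak).
Qed.

Lemma excl_asgsK_excl (S T : {set A}) a al : sentence al -> a \in S -> a \notin T ->
  thm (Imp (excl x phi S) (asgsK (ls S) (Imp (excl x phi T) (asgsK (ls T) al)))).
Proof.
move=> Sa HaS HaT; have SDia := sent_Dia a; have SES := sent_excl S.
have SET := sent_excl T; have SDT := sent_asgsK (ls T) Sa.
have Relist : thm (Imp (Asg x a (K [fset x] (Dia x a phi))) (asgsK (ls S) (Dia x a phi))).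
  rewrite -(vars1 x a); apply: (@asgsK_relist [:: (x, a)]); rewrite ?uniq_listing // => b.
  by rewrite inE => /eqP ->; rewrite mem_listing.
have Vacuous : thm (Imp (Dia x a phi) (Imp (excl x phi T) (asgsK (ls T) al))).
  have : thm (Imp (Dia x a phi) (Neg (excl x phi T))).
    by apply: thm_taut; [exact: Dia_Neg_excl | wf_tac].
  by move/thm_taut1; apply; [taut_tac | wf_tac].
have EDia : thm (Imp (excl x phi S) (Dia x a phi)).
  by apply: thm_taut; [exact: excl_Dia | wf_tac].
apply: thm_imp_trans EDia (thm_imp_trans (Dia_Asg_K Hwf Hfv (Hphi a)) (thm_imp_trans Relist _)).
exact: asgs_mono _ (thm_K_mono _ SDia (sentI SET SDT) Vacuous).
Qed.

Lemma asgsK_Kphi S al : sentence al ->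
  thm (Imp (And (excl x phi S) (asgsK (ls S) al)) (asgsK (ls S) (Kp al))).
Proof.
move=> Sa; have SE := sent_excl S; have SD := sent_asgsK (ls S) Sa; have SED := sentA SE SD.
apply: asgs_K_bigAnd => [|T|T]; first exact: sent_wf.
  exact: sentI (sent_excl T) (sent_asgsK _ Sa).
have [HST | /subsetPn[a HaS HaT]] := boolP (S \subset T).
  apply: thm_imp_trans (asgsK_excl_subset Sa HST).
  by apply: thm_taut; [taut_tac | wf_tac].
apply: thm_imp_trans (excl_asgsK_excl Sa HaS HaT).
by apply: thm_taut; [taut_tac | wf_tac].
Qed.

Lemma Kphi_introspection al : sentence al -> thm (Imp (Kp al) (Kp (Kp al))).
Proof.
move=> Sa; have SK := sent_Kphi Sa.
apply: thm_Imp_bigAnd => [|S]; first exact: sent_wf.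
have SE := sent_excl S; have SD := sent_asgsK (ls S) SK.
by apply: (thm_taut2 (Kphi_excl S Sa) (asgsK_Kphi S Sa)); [taut_tac | wf_tac].
Qed.

End IntensionalKnowledge.

End LELTheory.

Theorem lemma1 (A : finType) (HA : 0 < #|A|)
  (ls : {set A} -> seq (nat * A)) (Hls : good_listing ls)
  (x : nat) (phi : form A) (Hwf : wf phi) (Hfv : fv phi `<=` [fset x])
  (H : forall a : A, thm (Asg x a (Imp phi (K [fset x] (Asg x a phi))))) :
  forall alpha : form A, sentence alpha ->
    thm (Imp (Kphi ls x phi alpha) (Kphi ls x phi (Kphi ls x phi alpha))).
Proof.
by move=> alpha; apply: (Kphi_introspection Hls Hwf Hfv H).
Qed.
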